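(* Let $\varepsilon\in\{0,\tfrac12\}$ and let $f$ be a biderivation of $\mathcal{SV}(\varepsilon)$. Then there exist linear maps $\phi,\psi:\mathcal{SV}(\varepsilon)\to\mathcal{SV}(\varepsilon)$ and linear complex-valued functions $\rho_1,\rho_2,\rho_3,\theta_1,\theta_2,\theta_3$ on $\mathcal{SV}(\varepsilon)$ such that for all $x,y\in\mathcal{SV}(\varepsilon)$, $$f(x,y)=\rho_1(x)D_1(y)+\rho_2(x)D_2(y)+\rho_3(x)D_3(y)+[\phi(x),y]=\theta_1(y)D_1(x)+\theta_2(y)D_2(x)+\theta_3(y)D_3(x)+[x,\psi(y)].$$
   Context: For $\varepsilon\in\{0,\frac12\}$, $\mathcal{SV}(\varepsilon)$ is the complex Lie algebra with basis $\{L_i,Y_j,M_i\mid i\in\mathbb{Z},\ j\in\varepsilon+\mathbb{Z}\}$ and brackets $[L_m,L_n]=(m-n)L_{m+n}$, $[L_m,Y_n]=(\frac12 m-n)Y_{m+n}$, $[L_m,M_n]=-nM_{m+n}$, $[Y_m,Y_n]=(m-n)M_{m+n}$, $[Y_m,M_n]=[M_m,M_n]=0$. A biderivation of a Lie algebra $L$ is a bilinear map $f:L\times L\to L$ with $f([x,y],z)=[x,f(y,z)]+[f(x,z),y]$ and $f(x,[y,z])=[f(x,y),z]+[y,f(x,z)]$ for all $x,y,z\in L$. The linear maps $D_1,D_2,D_3$ on $\mathcal{SV}(\varepsilon)$ are defined by $D_1(L_m)=M_m$, $D_1(Y_j)=D_1(M_m)=0$; $D_2(L_m)=mM_m$, $D_2(Y_j)=D_2(M_m)=0$;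 $D_3(L_m)=0$, $D_3(Y_j)=Y_j$, $D_3(M_m)=2M_m$ (for all $m\in\mathbb{Z}$, $j\in\varepsilon+\mathbb{Z}$). *)

(* The Schroedinger-Virasoro algebra SV(eps) over the
   complex numbers C := R[i] (R = Stdlib reals, an rcfType via Rstruct),
   realised as the free C-vector space {malg C[Idx]} (finitely supported
   functions Idx -> C, from multinomials' monalg) on the basis
   Idx = {L_m} + {Y_(k+eps)} + {M_m}, with the bracket extended bilinearly. *)
From HB Require Import structures.
From mathcomp Require Import all_boot all_order all_algebra.
From mathcomp Require Import finmap.
From mathcomp Require Import complex.
From mathcomp Require Import Rstruct.
From mathcomp.multinomials Require Import monalg.
From Stdlib Require Import Rdefinitions.

Set Implicit Arguments.
Unset Strict Implicit.
Unset Printing Implicit Defensive.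

Import Order.TTheory GRing.Theory Num.Theory.
Local Open Scope ring_scope.

Definition C : Type := (Rdefinitions.R)[i].

(* Basis indices:  inl (inl m) = L_m,  inl (inr k) = Y_(k + eps),  inr m = M_m. *)
Definition Idx : Type := ((int + int) + int)%type.
Definition Lb (m : int) : Idx := inl (inl m).
Definition Yb (k : int) : Idx := inl (inr k).
Definition Mb (m : int) : Idx := inr m.

(* eps is encoded by a boolean: false <-> eps = 0, true <-> eps = 1/2. *)
Definition epsv (e : bool) : C := if e then 2%:R^-1 else 0.
Definition twoeps (e : bool) : int := if e then 1 else 0.

Definition SV (e : bool) : Type := {malg C[Idx]}.

Definition bvec (e : bool) (c : C) (k : Idx) : SV e := << c *g k >>.

Definition br (e : bool) (a b : Idx) : SV e :=
  match a, b with
  | inl (inl m), inl (inl n) => bvec e (m - n)%:~R (Lb (m + n))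
  | inl (inl m), inl (inr k) =>
      bvec e (m%:~R / 2%:R - (k%:~R + epsv e)) (Yb (m + k))
  | inl (inr k), inl (inl m) =>
      bvec e (- (m%:~R / 2%:R - (k%:~R + epsv e))) (Yb (m + k))
  | inl (inl m), inr n => bvec e (- n%:~R) (Mb (m + n))
  | inr n, inl (inl m) => bvec e (n%:~R) (Mb (m + n))
  | inl (inr j), inl (inr k) =>
      bvec e ((j - k)%:~R) (Mb (j + k + twoeps e))
  | _, _ => 0
  end.

Definition lie (e : bool) (x y : SV e) : SV e :=
  \sum_(a <- msupp x) \sum_(b <- msupp y) (x@_a * y@_b) *: br e a b.

Definition linext (e : bool) (g : Idx -> SV e) (x : SV e) : SV e :=
  \sum_(a <- msupp x) x@_a *: g a.

Definition D1b (e : bool) (a : Idx) : SV e :=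
  match a with inl (inl m) => bvec e 1 (Mb m) | _ => 0 end.
Definition D2b (e : bool) (a : Idx) : SV e :=
  match a with inl (inl m) => bvec e m%:~R (Mb m) | _ => 0 end.
Definition D3b (e : bool) (a : Idx) : SV e :=
  match a with
  | inl (inl _) => 0
  | inl (inr k) => bvec e 1 (Yb k)
  | inr m => bvec e 2%:R (Mb m)
  end.

Definition D1 (e : bool) : SV e -> SV e := linext (@D1b e).
Definition D2 (e : bool) : SV e -> SV e := linext (@D2b e).
Definition D3 (e : bool) : SV e -> SV e := linext (@D3b e).

Definition biderivation (e : bool) (f : SV e -> SV e -> SV e) : Prop :=
  (forall x y z, f (lie x y) z = lie x (f y z) + lie (f x z) y) /\
  (forall x y z, f x (lie y z) = lie (f x y) z + lie y (f x z)).

(* For every basis vector a, both f(a, -) and f(-, a) are derivations of SV(eps), so it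
   suffices to show that every derivation D is k1 D1 + k2 D2 + k3 D3 + ad v and then to
   extend the coefficients linearly in a.
   Since [L_0, x] = -deg(x) x for homogeneous x, applying D to [L_0, x] shows that each
   degree-changing component of D is the corresponding component of ad v_out, where v_out
   is D(L_0) with every homogeneous component divided by its degree.  The
   degree-preserving components of D are pinned down by the functional equations that D
   inherits from [L_m, L_n], [L_m, Y_k], [L_m, M_n] and [Y_j, Y_k]; solving them, they
   agree with those of kD1 D1 + kD2 D2 + kD3 D3 + ad(- alpha L_0 + lamY Y_0), where Y_0
   only occurs for eps = 0. *)

From HB Require Import structures.
From mathcomp Require Import all_boot all_order all_algebra.
From mathcomp Require Import finmap complex Rstruct.
From mathcomp.multinomials Require Import monalg.
From mathcomp Require Import ring zify.
From Stdlib Require Import IndefiniteDescription.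

Set Implicit Arguments.
Unset Strict Implicit.
Unset Printing Implicit Defensive.

Import GRing.Theory Num.Theory.
Local Open Scope ring_scope.

Lemma scale_lincomb (R : comNzRingType) (V : lmodType R) (t k1 k2 k3 : R) (X X1 X2 X3 Y : V) :
  X = k1 *: X1 + k2 *: X2 + k3 *: X3 + Y ->
  t *: X = k1 *: (t *: X1) + k2 *: (t *: X2) + k3 *: (t *: X3) + t *: Y.
Proof. by move=> ->; rewrite !scalerDr !scalerA ![t * _]mulrC. Qed.

Lemma sum_scale_lincomb (R : comNzRingType) (V : lmodType R) (I : Type) (s : seq I)
    (x r1 r2 r3 : I -> R) (X1 X2 X3 : V) (Y : I -> V) :
  \sum_(a <- s) x a *: (r1 a *: X1 + r2 a *: X2 + r3 a *: X3 + Y a) =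
  (\sum_(a <- s) x a * r1 a) *: X1 + (\sum_(a <- s) x a * r2 a) *: X2
  + (\sum_(a <- s) x a * r3 a) *: X3 + \sum_(a <- s) x a *: Y a.
Proof.
rewrite !scaler_suml -!big_split; apply: eq_bigr => a _ /=.
by rewrite !scalerDr !scalerA.
Qed.

Section Basis.
Variable e : bool.
Local Notation SV := (SV e).

Lemma big_msupp_widen (V : zmodType) (x : SV) (dom : {fset Idx}) (F : Idx -> C -> V) :
  (msupp x `<=` dom)%fset -> (forall a, F a 0 = 0) ->
  \sum_(a <- msupp x) F a x@_a = \sum_(a <- dom) F a x@_a.
Proof. by move=> sub F0; apply: big_fset_incl => // a _ /mcoeff_outdom ->. Qed.

Lemma msuppZD_le (k : C) (x y : SV) :
  (msupp (k *: x + y) `<=` msupp x `|` msupp y)%fset.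
Proof. exact: fsubset_trans (msuppD_le _ _) (fsetSU _ (msuppZ_le _ _)). Qed.

Lemma bvecE c k : bvec e c k = c *: << k >>.
Proof. by apply/malgP => b; rewrite /bvec mcoeffZ !mcoeffU mulr_natr. Qed.

Lemma mcoeff_bvec c k k' : k = k' -> (bvec e c k)@_k' = c.
Proof. by move=> <-; rewrite mcoeffUU. Qed.

Lemma mcoeff_bvec_neq c k k' : k != k' -> (bvec e c k)@_k' = 0.
Proof. by move=> ne; rewrite mcoeffU (negbTE ne) mulr0n. Qed.

Lemma msupp_basis (a : Idx) : msupp (<< a >> : SV) = [fset a]%fset.
Proof. by rewrite msuppU oner_eq0. Qed.

Lemma lie_widen (x y : SV) dx dy :
  (msupp x `<=` dx)%fset -> (msupp y `<=` dy)%fset ->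
  lie x y = \sum_(a <- dx) \sum_(b <- dy) (x@_a * y@_b) *: br e a b.
Proof.
move=> sx sy; rewrite /lie.
rewrite (@big_msupp_widen _ x dx (fun a c => \sum_(b <- msupp y) (c * y@_b) *: br e a b)) //;
  last by move=> a; apply: big1 => b _; rewrite mul0r scale0r.
apply: eq_bigr => a _.
by rewrite (@big_msupp_widen _ y dy (fun b c => (x@_a * c) *: br e a b)) // => b;
  rewrite mulr0 scale0r.
Qed.

Lemma lie_linear_l (z : SV) : linear (fun x => lie x z).
Proof.
move=> k x y /=.
rewrite !(@lie_widen _ _ (msupp x `|` msupp y)%fset (msupp z))
  ?msuppZD_le ?fsubsetUl ?fsubsetUr //.
rewrite scaler_sumr -big_split; apply: eq_bigr => a _ /=.
rewrite scaler_sumr -big_split; apply: eq_bigr => b _ /=.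
by rewrite mcoeffD mcoeffZ mulrDl scalerDl scalerA mulrA.
Qed.

Lemma lie_linear_r (x : SV) : linear (lie x).
Proof.
move=> k y z /=.
rewrite !(@lie_widen _ _ (msupp x) (msupp y `|` msupp z)%fset)
  ?msuppZD_le ?fsubsetUl ?fsubsetUr //.
rewrite scaler_sumr -big_split; apply: eq_bigr => a _ /=.
rewrite scaler_sumr -big_split; apply: eq_bigr => b _ /=.
by rewrite mcoeffD mcoeffZ mulrDr scalerDl scalerA mulrCA.
Qed.

Lemma linext_linear (g : Idx -> SV) : linear (linext g).
Proof.
move=> k x y; rewrite /linext.
rewrite !(@big_msupp_widen _ _ (msupp x `|` msupp y)%fset (fun a c => c *: g a))
  ?msuppZD_le ?fsubsetUl ?fsubsetUr //; try by move=> a; rewrite scale0r.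
rewrite scaler_sumr -big_split; apply: eq_bigr => a _ /=.
by rewrite mcoeffD mcoeffZ scalerDl scalerA.
Qed.

Lemma lieDl (x y z : SV) : lie (x + y) z = lie x z + lie y z.
Proof. by have := lie_linear_l z 1 x y; rewrite !scale1r. Qed.

Lemma lieZl k (x z : SV) : lie (k *: x) z = k *: lie x z.
Proof. exact: (scalable_linear (lie_linear_l z)). Qed.

Definition linform (r : Idx -> C) (x : SV) : C := \sum_(a <- msupp x) x@_a * r a.

Lemma linform_scalar (r : Idx -> C) : scalar (linform r).
Proof.
move=> k x y; rewrite /linform.
rewrite !(@big_msupp_widen _ _ (msupp x `|` msupp y)%fset (fun a c => c * r a))
  ?msuppZD_le ?fsubsetUl ?fsubsetUr //; try by move=> a; rewrite mul0r.
rewrite mulr_sumr -big_split; apply: eq_bigr => a _ /=.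
by rewrite mcoeffD mcoeffZ mulrDl mulrA.
Qed.

Definition linear_of (g : SV -> SV) (g_lin : linear g) : {linear SV -> SV} :=
  HB.pack g (GRing.isLinear.Build _ _ _ _ g g_lin).

Definition scalar_of (g : SV -> C) (g_lin : scalar g) : {scalar SV} :=
  HB.pack g (GRing.isLinear.Build _ _ _ _ g g_lin).

Lemma lieNr (x y : SV) : lie x (- y) = - lie x y.
Proof. exact: (raddfN (linear_of (lie_linear_r x))). Qed.

Lemma linear_expand (F : SV -> SV) : linear F ->
  forall y, F y = \sum_(a <- msupp y) y@_a *: F << a >>.
Proof.
move=> F_lin y; have -> : F y = linear_of F_lin (\sum_(a <- msupp y) << y@_a *g a >>).
  by rewrite -monalgE.
rewrite raddf_sum; apply: eq_bigr => a _.
by rewrite -[<< _ *g _ >>]/(bvec e _ _) bvecE; exact: (scalable_linear F_lin).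
Qed.

Lemma lie_basis (a b : Idx) : lie (<< a >> : SV) << b >> = br e a b.
Proof. by rewrite /lie !msupp_basis !big_seq_fset1 !mcoeffUU mulr1 scale1r. Qed.

(* This lemma and the next are stated for abstract vectors: rewriting inside concrete
   elements of SV makes unification unfold them, which is very slow. *)
Lemma lie_lincomb_basis k1 k2 a1 a2 x :
  lie (k1 *: << a1 >> + k2 *: << a2 >> : SV) << x >> = k1 *: br e a1 x + k2 *: br e a2 x.
Proof.
apply: (etrans (lieDl _ _ _)).
by congr (_ + _); apply: (etrans (lieZl _ _ _)); congr (_ *: _); apply: lie_basis.
Qed.

Lemma mcoeff_lincomb (k1 k2 k3 l1 l2 : C) (X1 X2 X3 L B1 B2 : SV) b :
  (k1 *: X1 + k2 *: X2 + k3 *: X3 + (L + (l1 *: B1 + l2 *: B2)))@_b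
  = L@_b + (k1 * X1@_b + k2 * X2@_b + k3 * X3@_b + (l1 * B1@_b + l2 * B2@_b)).
Proof.
by rewrite !mcoeffD addrCA; congr (_ + (_ + _ + _ + (_ + _))); apply: mcoeffZ.
Qed.

Lemma linext_basis (g : Idx -> SV) a : linext g << a >> = g a.
Proof. by rewrite /linext msupp_basis big_seq_fset1 mcoeffUU scale1r. Qed.

Lemma mcoeff_lie_basis_r (v : SV) y b :
  (lie v << y >>)@_b = \sum_(a <- msupp v) v@_a * (br e a y)@_b.
Proof.
rewrite /lie raddf_sum; apply: eq_bigr => a _.
by rewrite msupp_basis big_seq_fset1 mcoeffUU mulr1 /= mcoeffZ.
Qed.

Lemma mcoeff_lie_basis_l (v : SV) y b :
  (lie << y >> v)@_b = \sum_(a <- msupp v) v@_a * (br e y a)@_b.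
Proof.
rewrite /lie msupp_basis big_seq_fset1 raddf_sum; apply: eq_bigr => a _.
by rewrite mcoeffUU mul1r /= mcoeffZ.
Qed.

Lemma br_anti a b : br e a b = - br e b a.
Proof.
have bvec_anti c c' k k' : c = - c' -> k = k' -> bvec e c k = - bvec e c' k'.
  by move=> -> ->; apply/malgP => i; rewrite mcoeffN !mcoeffU mulNrn.
case: a => [[m|j]|m]; case: b => [[n|k]|n]; try exact: (esym (oppr0 _)).
- by apply: bvec_anti; [rewrite -intrN opprB | rewrite addrC].
- by apply: bvec_anti; [rewrite opprK |].
- by apply: bvec_anti.
- by apply: bvec_anti.
- by apply: bvec_anti; [rewrite -intrN opprB | rewrite (addrC j k)].
- by apply: bvec_anti; [rewrite opprK |].
Qed.

Lemma lie_anti (x y : SV) : lie x y = - lie y x.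
Proof.
rewrite /lie exchange_big -sumrN; apply: eq_bigr => a _.
by rewrite -sumrN; apply: eq_bigr => b _; rewrite br_anti scalerN mulrC.
Qed.

End Basis.

Definition br_idx (e : bool) (a b : Idx) : option Idx :=
  match a, b with
  | inl (inl m), inl (inl n) => Some (Lb (m + n))
  | inl (inl m), inl (inr k) | inl (inr k), inl (inl m) => Some (Yb (m + k))
  | inl (inl m), inr n | inr n, inl (inl m) => Some (Mb (m + n))
  | inl (inr j), inl (inr k) => Some (Mb (j + k + twoeps e))
  | _, _ => None
  end.

(* Twice the degree (m for L_m and M_m, k + eps for Y_(k+eps)), an integer. *)
Definition deg2 (e : bool) (a : Idx) : int :=
  match a with
  | inl (inl m) | inr m => 2 * m
  | inl (inr k) => 2 * k + twoeps e
  end.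

Section Grading.
Variable e : bool.
Local Notation SV := (SV e).

Lemma br_idx_supp a c b : (br e a c)@_b != 0 -> br_idx e a c = Some b.
Proof.
case: a => [[m|j]|m]; case: c => [[n|k]|n] /=; rewrite ?mcoeff0 ?eqxx //;
  rewrite ?mcoeffU; case: (boolP (_ == b)) => [/eqP<-//|_]; rewrite mulr0n eqxx //.
Qed.

Lemma br_idx_deg2 a c b : br_idx e a c = Some b -> deg2 e b = deg2 e a + deg2 e c.
Proof. by case: a => [[m|j]|m]; case: c => [[n|k]|n] //= [<-] /=; lia. Qed.

Lemma br_idx_inj_l a a' c b : br_idx e a c = Some b -> br_idx e a' c = Some b -> a = a'.
Proof.
case: a => [[m|j]|m]; case: a' => [[m'|j']|m']; case: c => [[n|k]|n] //= [<-] //= [];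
  move=> H; first [congr (inl (inl _)) | congr (inl (inr _)) | congr (inr _)]; lia.
Qed.

Lemma br_idx_inj_r a c c' b : br_idx e a c = Some b -> br_idx e a c' = Some b -> c = c'.
Proof.
case: a => [[m|j]|m]; case: c => [[n|k]|n]; case: c' => [[n'|k']|n'] //= [<-] //= [];
  move=> H; first [congr (inl (inl _)) | congr (inl (inr _)) | congr (inr _)]; lia.
Qed.

Lemma mcoeff_lie_r_idx (v : SV) y b a0 : br_idx e a0 y = Some b ->
  (lie v << y >>)@_b = v@_a0 * (br e a0 y)@_b.
Proof.
move=> a0y; rewrite mcoeff_lie_basis_r.
have others a : a != a0 -> v@_a * (br e a y)@_b = 0.
  move=> ne; apply/eqP; rewrite mulf_eq0; apply/orP; right.
  apply: contraNT ne => /br_idx_supp ay; exact/eqP/(br_idx_inj_l ay a0y).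
have [a0v|a0v] := boolP (a0 \in msupp v).
  rewrite (big_fsetD1 a0) //= big1_fset ?addr0 // => a.
  by rewrite in_fsetD1 => /andP[ne _] _; apply: others.
rewrite mcoeff_outdom // mul0r big1_fset // => a av _.
by apply: others; apply: contraNneq a0v => <-.
Qed.

Lemma mcoeff_lie_r_none (v : SV) y b : (forall a, br_idx e a y <> Some b) ->
  (lie v << y >>)@_b = 0.
Proof.
move=> none; rewrite mcoeff_lie_basis_r big1 // => a _.
have [/br_idx_supp/none //|] := boolP ((br e a y)@_b != 0).
by rewrite negbK => /eqP ->; rewrite mulr0.
Qed.

Lemma br_idx_sym a c : br_idx e a c = br_idx e c a.
Proof.
case: a => [[m|j]|m]; case: c => [[n|k]|n] //=; first by rewrite addrC.
by rewrite (addrC j).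
Qed.

Lemma mcoeff_lie_l_idx (v : SV) y b a0 : br_idx e y a0 = Some b ->
  (lie << y >> v)@_b = v@_a0 * (br e y a0)@_b.
Proof.
rewrite br_idx_sym => a0y.
by rewrite lie_anti mcoeffN (mcoeff_lie_r_idx _ a0y) br_anti mcoeffN mulrN opprK.
Qed.

End Grading.


Lemma eq_of_lincomb {c d p q t u : C} :
  c != 0 -> p = q -> c * (t - u) = d * (p - q) -> t = u.
Proof.
move=> c0 ->; rewrite subrr mulr0 => /eqP.
by rewrite mulf_eq0 (negbTE c0) subr_eq0 => /eqP.
Qed.

Lemma eq_of_lincomb2 {c d1 d2 p1 q1 p2 q2 t u : C} : c != 0 -> p1 = q1 -> p2 = q2 ->
  c * (t - u) = d1 * (p1 - q1) + d2 * (p2 - q2) -> t = u.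
Proof.
move=> c0 -> ->; rewrite !subrr !mulr0 addr0 => /eqP.
by rewrite mulf_eq0 (negbTE c0) subr_eq0 => /eqP.
Qed.

Lemma nat_ind_from2 (P : nat -> Prop) : P 0%N -> P 1%N -> P 2%N ->
  (forall k, (2 <= k)%N -> P k -> P k.+1) -> forall k, P k.
Proof. by move=> P0 P1 P2 PS; elim=> [|[|[|k]] IH] //; apply: PS. Qed.

Lemma int_sign_ind (P : int -> Prop) :
  (forall k : nat, P k) -> (forall k : nat, P (- k%:Z)) -> forall n, P n.
Proof. by move=> Pp Pn [k|k]; [apply: Pp | rewrite NegzE; apply: Pn]. Qed.

(* [L_m, Y_(k+eps)] = lyc e m k Y_(m+k+eps). *)
Definition lyc (e : bool) (m k : int) : C := m%:~R / 2%:R - (k%:~R + epsv e).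

Lemma lyc_neq0 e m k : m != 2 * k + twoeps e -> lyc e m k != 0.
Proof.
have -> : lyc e m k = (m - 2 * k - twoeps e)%:~R / 2%:R.
  by case: e; rewrite /lyc /epsv /twoeps; field.
by rewrite mulf_eq0 invr_eq0 pnatr_eq0 orbF intr_eq0; lia.
Qed.

Lemma solve_cLL (A : int -> C) :
  (forall m n : int, (m - n)%:~R * A (m + n) = A m * (m - n)%:~R + A n * (m - n)%:~R) ->
  forall n, A n = n%:~R * A 1.
Proof.
move=> H.
have A0 : A 0 = 0.
  have E : 1%:~R * A 1 = A 1 * 1%:~R + A 0 * 1%:~R := H 1 0.
  by apply: (eq_of_lincomb (c:=1) (d:=-1) _ E); [rewrite oner_eq0 | ring].
have An : forall n, A (- n) = - A n.
  move=> n; have [->|n0] := eqVneq n 0; first by rewrite oppr0 A0 oppr0.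
  have E := H n (-n); rewrite opprK addrN A0 in E.
  apply: (eq_of_lincomb (c:=(n+n)%:~R) (d:=-1) _ E); [rewrite intr_eq0; lia | ring].
have Ap : forall k : nat, A (Posz k) = (Posz k)%:~R * A 1.
  apply: nat_ind_from2.
  - by rewrite A0 mul0r.
  - by rewrite mul1r.
  - have E : 3%:~R * A 1 = A 2 * 3%:~R + A (-1) * 3%:~R := H 2 (-1).
    rewrite An in E.
    apply: (eq_of_lincomb (c:=3%:~R) (d:= -1) _ E); [by rewrite intr_eq0 | ring].
  move=> k k2 IH.
  have E := H k 1; rewrite IH in E.
  have -> : Posz k.+1 = k%:Z + 1 by lia.
  apply: (eq_of_lincomb (c:=(k%:Z - 1)%:~R) (d:= 1) _ E); [rewrite intr_eq0; lia | ring].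
apply: int_sign_ind => k; first exact: Ap.
by rewrite An Ap mulrNz mulNr.
Qed.

Lemma solve_cLM (B : int -> C) :
  (forall m n : int, (m - n)%:~R * B (m + n) = B m * m%:~R + B n * - n%:~R) ->
  forall n, B n = B 0 + n%:~R * (B 1 - B 0).
Proof.
move=> H.
have Bm1 : B (-1) = B 0 + (-1)%:~R * (B 1 - B 0).
  have E : 2%:~R * B 0 = B 1 * 1%:~R + B (-1) * - (-1)%:~R := H 1 (-1).
  apply: (eq_of_lincomb (c:=1) (d:=-1) _ E); [by rewrite oner_eq0 | ring].
apply: int_sign_ind.
  apply: nat_ind_from2.
  - ring.
  - ring.
  - have E : 3%:~R * B 1 = B 2 * 2%:~R + B (-1) * - (-1)%:~R := H 2 (-1).
    rewrite Bm1 in E.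
    apply: (eq_of_lincomb (c:=2%:~R) (d:= -1) _ E); [by rewrite intr_eq0 | ring].
  move=> k k2 IH.
  have E := H k 1; rewrite IH in E.
  have -> : Posz k.+1 = k%:Z + 1 by lia.
  apply: (eq_of_lincomb (c:=(k%:Z - 1)%:~R) (d:= 1) _ E); [rewrite intr_eq0; lia | ring].
apply: nat_ind_from2.
- ring.
- exact: Bm1.
- have E : (-3)%:~R * B (-1) = B (-2) * (-2)%:~R + B 1 * - 1%:~R := H (-2) 1.
  rewrite Bm1 in E.
  apply: (eq_of_lincomb (c:=2%:~R) (d:= 1) _ E); [by rewrite intr_eq0 | ring].
move=> k k2 IH.
have E := H (- k%:Z) (-1); rewrite IH Bm1 in E.
have -> : - Posz k.+1 = - k%:Z + -1 by lia.
apply: (eq_of_lincomb (c:=(1 - k%:Z)%:~R) (d:= 1) _ E); [rewrite intr_eq0; lia | ring].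
Qed.

Lemma solve_cLY (G : int -> C) :
  (forall m n : int, (m - n)%:~R * G (m + n) = G m * - lyc false n m + G n * lyc false m n) ->
  forall n, G n = n%:~R * G 1.
Proof.
move=> H.
have G0 : G 0 = 0.
  have E : 1%:~R * G 1 = G 1 * - lyc false 0 1 + G 0 * lyc false 1 0 := H 1 0.
  rewrite /lyc /epsv in E.
  apply: (eq_of_lincomb (c:=1) (d:=-2%:R) _ E); [by rewrite oner_eq0 | by field].
have Gm1 : G (-1) = - G 1.
  have E : 2%:~R * G 0 = G 1 * - lyc false (-1) 1 + G (-1) * lyc false 1 (-1) := H 1 (-1).
  rewrite /lyc /epsv G0 in E.
  apply: (eq_of_lincomb (c:=3%:R) (d:=-2%:R) _ E); [by rewrite pnatr_eq0 | by field].
apply: int_sign_ind.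
  apply: nat_ind_from2.
  - by rewrite G0 mul0r.
  - by rewrite mul1r.
  - have E : 3%:~R * G 1 = G 2 * - lyc false (-1) 2 + G (-1) * lyc false 2 (-1) := H 2 (-1).
    rewrite /lyc /epsv Gm1 in E.
    apply: (eq_of_lincomb (c:=5%:R) (d:= -2%:R) _ E); [by rewrite pnatr_eq0 | by field].
  move=> k k2 IH.
  have E := H k 1; rewrite IH /lyc /epsv in E.
  have -> : Posz k.+1 = k%:Z + 1 by lia.
  apply: (eq_of_lincomb (c:=(k%:Z - 1)%:~R) (d:= 1) _ E); [rewrite intr_eq0; lia | by field].
apply: nat_ind_from2.
- by rewrite oppr0 G0 mul0r.
- by transitivity (- G 1); [exact: Gm1 | ring].
- have E : (-3)%:~R * G (-1) = G (-2) * - lyc false 1 (-2) + G 1 * lyc false (-2) 1 := H (-2) 1.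
  rewrite /lyc /epsv Gm1 in E.
  apply: (eq_of_lincomb (c:=5%:R) (d:= 2%:R) _ E); [by rewrite pnatr_eq0 | by field].
move=> k k2 IH.
have E := H (- k%:Z) (-1); rewrite IH Gm1 /lyc /epsv in E.
have -> : - Posz k.+1 = - k%:Z + -1 by lia.
apply: (eq_of_lincomb (c:=(1 - k%:Z)%:~R) (d:= 1) _ E); [rewrite intr_eq0; lia | by field].
Qed.

Lemma solve_cYY e (A Q : int -> C) (al : C) : (forall m, A m = m%:~R * al) ->
  (forall m k : int, lyc e m k * Q (m + k) = A m * lyc e m k + Q k * lyc e m k) ->
  forall k, Q k = Q 0 + k%:~R * al.
Proof.
move=> HA H.
have Qk0 : forall k, lyc e k 0 != 0 -> Q k = Q 0 + k%:~R * al.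
  move=> k nz0; have E := H k 0; rewrite addr0 HA in E.
  by apply: (eq_of_lincomb (c:=lyc e k 0) (d:= 1) nz0 E); ring.
move=> k; have [->|k0] := eqVneq k 0; first by rewrite mul0r addr0.
case: e H HA Qk0 => H HA Qk0; last by apply/Qk0/lyc_neq0; rewrite /twoeps; lia.
have [->|k1] := eqVneq k 1; last by apply/Qk0/lyc_neq0; rewrite /twoeps; lia.
have Qm1 : Q (-1) = Q 0 + (-1)%:~R * al by apply/Qk0/lyc_neq0.
have E : lyc true 2 (-1) * Q 1 = A 2 * lyc true 2 (-1) + Q (-1) * lyc true 2 (-1) := H 2 (-1).
rewrite Qm1 HA /lyc /epsv in E.
apply: (eq_of_lincomb (c:=3%:R) (d:= 2%:R) _ E); [by rewrite pnatr_eq0 | by field].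
Qed.

Lemma solve_cMM (A V : int -> C) (al : C) : (forall m, A m = m%:~R * al) ->
  (forall m n : int, - n%:~R * V (m + n) = A m * - n%:~R + V n * - n%:~R) ->
  forall n, V n = V 0 + n%:~R * al.
Proof.
move=> HA H n.
have E1 := H (n - 1) 1; rewrite subrK HA in E1.
have E0 : - 1%:~R * V 0 = A (-1) * - 1%:~R + V 1 * - 1%:~R := H (-1) 1.
rewrite HA in E0.
apply: (eq_of_lincomb2 (c:=1) (d1:=-1) (d2:=1) _ E1 E0); [by rewrite oner_eq0 | ring].
Qed.

Lemma solve_cYL (P : int -> C) :
  (forall m k : int, lyc false m k * P (m + k) = P k * (m - k)%:~R) -> forall n, P n = 0.
Proof.
move=> H.
have P2 : P 2 = 0.
  have E : lyc false 1 1 * P 2 = P 1 * 0%:~R := H 1 1.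
  rewrite /lyc /epsv in E.
  apply: (eq_of_lincomb (c:=1) (d:=-2%:R) _ E); [by rewrite oner_eq0 | by field].
have P0 : P 0 = 0.
  have E : lyc false 2 0 * P 2 = P 0 * 2%:~R := H 2 0.
  rewrite /lyc /epsv P2 in E.
  apply: (eq_of_lincomb (c:=2%:R) (d:=-1) _ E); [by rewrite pnatr_eq0 | by field].
move=> n; have [->|n0] := eqVneq n 0; first exact: P0.
have E := H n 0; rewrite ?addr0 ?subr0 ?oppr0 P0 /lyc /epsv in E.
apply: (eq_of_lincomb (c:=n%:~R) (d:=2%:R) _ E); [by rewrite intr_eq0 | by field].
Qed.

Lemma solve_cYM (G R : int -> C) (g : C) : (forall m, G m = m%:~R * g) ->
  (forall m k : int, lyc false m k * R (m + k) = G m * (m - k)%:~R + R k * - k%:~R) ->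
  forall n, R n = 2%:R * n%:~R * g.
Proof.
move=> HG H.
have Rn : forall n, n != 0 -> R n = 2%:R * n%:~R * g.
  move=> n n0; have E := H n 0; rewrite ?addr0 ?subr0 ?oppr0 HG /lyc /epsv in E.
  apply: (eq_of_lincomb (c:=n%:~R) (d:=2%:R) _ E); [by rewrite intr_eq0 | by field].
move=> n; have [->|n0] := eqVneq n 0; last exact: Rn.
have E : lyc false 1 (-1) * R 0 = G 1 * 2%:~R + R (-1) * - (-1)%:~R := H 1 (-1).
rewrite (Rn (-1)) // HG /lyc /epsv in E.
apply: (eq_of_lincomb (c:=3%:R) (d:=2%:R) _ E); [by rewrite pnatr_eq0 | by field].
Qed.

Lemma solve_cML (S : int -> C) :
  (forall m n : int, - n%:~R * S (m + n) = S n * (m - n)%:~R) -> forall n, S n = 0.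
Proof.
move=> H.
have S2 : S 2 = 0.
  have E : - 1%:~R * S 2 = S 1 * 0%:~R := H 1 1.
  apply: (eq_of_lincomb (c:=1) (d:=-1) _ E); [by rewrite oner_eq0 | ring].
have S1 : S 1 = 0.
  have E : - 2%:~R * S 1 = S 2 * (-3)%:~R := H (-1) 2.
  rewrite S2 in E.
  apply: (eq_of_lincomb (c:=2%:R) (d:=-1) _ E); [by rewrite pnatr_eq0 | ring].
move=> n; have E := H (n - 1) 1; rewrite subrK S1 in E.
apply: (eq_of_lincomb (c:=1) (d:=-1) _ E); [by rewrite oner_eq0 | ring].
Qed.

Lemma solve_cMY (T : int -> C) :
  (forall m n : int, - n%:~R * T (m + n) = T n * lyc false m n) -> forall n, T n = 0.
Proof.
move=> H.
have T3 : T 3 = 0.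
  have E : - 1%:~R * T 3 = T 1 * lyc false 2 1 := H 2 1.
  rewrite /lyc /epsv in E.
  apply: (eq_of_lincomb (c:=1) (d:=-1) _ E); [by rewrite oner_eq0 | by field].
move=> n; have E := H (n - 3) 3; rewrite subrK T3 in E.
apply: (eq_of_lincomb (c:=3%:R) (d:=-1) _ E); [by rewrite pnatr_eq0 | ring].
Qed.

Section Degree.
Variable e : bool.
Local Notation SV := (SV e).

Definition deg (a : Idx) : C := (deg2 e a)%:~R / 2%:R.

Lemma deg_eq0 a : (deg a == 0) = (deg2 e a == 0).
Proof. by rewrite mulf_eq0 invr_eq0 pnatr_eq0 orbF intr_eq0. Qed.

Lemma degB a b : deg b - deg a = (deg2 e b - deg2 e a)%:~R / 2%:R.
Proof. by rewrite /deg intrB mulrBl. Qed.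

Lemma br_idx_L0 b : br_idx e (Lb 0) b = Some b.
Proof. by case: b => [[n|k]|n] /=; rewrite add0r. Qed.

Lemma mcoeff_br_L0 b : (br e (Lb 0) b)@_b = - deg b.
Proof.
case: b => [[n|k]|n]; rewrite /= mcoeff_bvec ?add0r // /deg /=.
- by rewrite intrN intrM; field.
- by rewrite /lyc; case: e; rewrite /epsv /twoeps ?addr0 ?intrD intrM; field.
- by rewrite intrM; field.
Qed.

Lemma br_L0 x : br e (Lb 0) x = (- deg x) *: << x >>.
Proof.
apply/malgP => b; rewrite mcoeffZ mcoeffU.
have [<-|ne] := eqVneq x b; first by rewrite mcoeff_br_L0 mulr1.
rewrite mulr0n mulr0; apply/eqP; apply: contraNT ne => /br_idx_supp.
by rewrite br_idx_L0 => -[->].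
Qed.

Lemma mcoeff_lie_L0 (v : SV) b : (lie << Lb 0 >> v)@_b = - deg b * v@_b.
Proof. by rewrite (mcoeff_lie_l_idx _ (br_idx_L0 b)) mcoeff_br_L0 mulrC. Qed.

End Degree.

Section Derivation.
Variable e : bool.
Local Notation SV := (SV e).
Variable D : SV -> SV.
Hypothesis D_lin : linear D.
Hypothesis D_der : forall x y, D (lie x y) = lie (D x) y + lie x (D y).

Lemma derZ c v : D (c *: v) = c *: D v.
Proof. exact: (scalable_linear D_lin). Qed.

Lemma der_coef x y z c b a0 a1 c0 c1 : br e x y = bvec e c z ->
  br_idx e a0 y = Some b -> br_idx e x a1 = Some b ->
  (br e a0 y)@_b = c0 -> (br e x a1)@_b = c1 ->
  c * (D << z >>)@_b = (D << x >>)@_a0 * c0 + (D << y >>)@_a1 * c1.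
Proof.
move=> xy a0y xa1 <- <-.
rewrite -(mcoeff_lie_r_idx _ a0y) -(mcoeff_lie_l_idx _ xa1) -mcoeffD -D_der.
by rewrite lie_basis xy bvecE derZ mcoeffZ.
Qed.

Lemma der_coef_r x y z c b a1 c1 : br e x y = bvec e c z ->
  (forall a, br_idx e a y <> Some b) -> br_idx e x a1 = Some b ->
  (br e x a1)@_b = c1 -> c * (D << z >>)@_b = (D << y >>)@_a1 * c1.
Proof.
move=> xy none xa1 <-.
rewrite -(mcoeff_lie_l_idx _ xa1) -[RHS]add0r -(mcoeff_lie_r_none (D << x >>) none).
by rewrite -mcoeffD -D_der lie_basis xy bvecE derZ mcoeffZ.
Qed.

Definition cLL n := (D << Lb n >>)@_(Lb n).
Definition cLY n := (D << Lb n >>)@_(Yb n).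
Definition cLM n := (D << Lb n >>)@_(Mb n).
Definition cYL k := (D << Yb k >>)@_(Lb k).
Definition cYY k := (D << Yb k >>)@_(Yb k).
Definition cYM k := (D << Yb k >>)@_(Mb k).
Definition cML n := (D << Mb n >>)@_(Lb n).
Definition cMY n := (D << Mb n >>)@_(Yb n).
Definition cMM n := (D << Mb n >>)@_(Mb n).

Lemma cLL_rec m n :
  (m - n)%:~R * cLL (m + n) = cLL m * (m - n)%:~R + cLL n * (m - n)%:~R.
Proof. by apply: der_coef => //; apply: mcoeff_bvec. Qed.

Lemma cLM_rec m n : (m - n)%:~R * cLM (m + n) = cLM m * m%:~R + cLM n * - n%:~R.
Proof. by apply: der_coef => //=; try apply: mcoeff_bvec; rewrite addrC. Qed.

Lemma cLY_rec m n :
  (m - n)%:~R * cLY (m + n) = cLY m * - lyc e n m + cLY n * lyc e m n.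
Proof. by apply: der_coef => //=; try apply: mcoeff_bvec; rewrite addrC. Qed.

Lemma cYY_rec m k :
  lyc e m k * cYY (m + k) = cLL m * lyc e m k + cYY k * lyc e m k.
Proof. by apply: der_coef => //; apply: mcoeff_bvec. Qed.

Lemma cYL_rec m k : lyc e m k * cYL (m + k) = cYL k * (m - k)%:~R.
Proof. by apply: (@der_coef_r (Lb m)) => //; [case=> [[]|] | apply: mcoeff_bvec]. Qed.

Lemma cYM_rec m k : e = false ->
  lyc e m k * cYM (m + k) = cLY m * (m - k)%:~R + cYM k * - k%:~R.
Proof.
by move=> e0; apply: der_coef => //=; try apply: mcoeff_bvec; rewrite ?e0 /= ?addr0.
Qed.

Lemma cMM_rec m n : - n%:~R * cMM (m + n) = cLL m * - n%:~R + cMM n * - n%:~R.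
Proof. by apply: der_coef => //; apply: mcoeff_bvec. Qed.

Lemma cML_rec m n : - n%:~R * cML (m + n) = cML n * (m - n)%:~R.
Proof. by apply: (@der_coef_r (Lb m)) => //; [case=> [[]|] | apply: mcoeff_bvec]. Qed.

Lemma cMY_rec m n : - n%:~R * cMY (m + n) = cMY n * lyc e m n.
Proof. by apply: (@der_coef_r (Lb m)) => //; [case=> [[]|] | apply: mcoeff_bvec]. Qed.

Lemma cMM_cYY_rec j k :
  (j - k)%:~R * cMM (j + k + twoeps e) = cYY j * (j - k)%:~R + cYY k * (j - k)%:~R.
Proof. by apply: der_coef => //; apply: mcoeff_bvec. Qed.

(* Degree-0 components are dropped, as x / 0 = 0. *)
Definition v_out : SV :=
  \sum_(a <- msupp (D << Lb 0 >>)) ((D << Lb 0 >>)@_a / deg e a) *: << a >>.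

Lemma mcoeff_v_out a : v_out@_a = (D << Lb 0 >>)@_a / deg e a.
Proof.
rewrite /v_out raddf_sum /=.
have [aw|aw] := boolP (a \in msupp (D << Lb 0 >>)).
  rewrite (big_fsetD1 a aw) big1_fset /= => [|a']; last first.
    by rewrite in_fsetD1 => /andP[ne _] _; rewrite mcoeffZ mcoeffU (negbTE ne) mulr0n mulr0.
  by rewrite addr0 mcoeffZ mcoeffUU mulr1.
rewrite mcoeff_outdom // mul0r big1_fset // => a' a'w _.
rewrite mcoeffZ mcoeffU; case: eqP => [a'a|]; last by rewrite mulr0n mulr0.
by move: a'w aw; rewrite a'a => ->.
Qed.

Lemma msupp_v_out : (msupp v_out `<=` msupp (D << Lb 0 >>))%fset.
Proof.
apply/fsubsetP => a; rewrite -!mcoeff_neq0 mcoeff_v_out.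
by apply: contraNneq => ->; rewrite mul0r.
Qed.

Lemma mcoeff_lie_DL0_offdeg x b : deg2 e b != deg2 e x ->
  (lie (D << Lb 0 >>) << x >>)@_b = (deg e b - deg e x) * (lie v_out << x >>)@_b.
Proof.
move=> bx; rewrite [in RHS](mcoeff_lie_basis_r v_out) [in LHS]mcoeff_lie_basis_r.
rewrite (@big_msupp_widen _ _ v_out (msupp (D << Lb 0 >>)) (fun a c => c * (br e a x)@_b))
  ?msupp_v_out // => [|a]; last exact: mul0r.
rewrite mulr_sumr; apply: eq_bigr => a _; rewrite mcoeff_v_out.
have [/br_idx_supp ax|] := boolP ((br e a x)@_b != 0); last first.
  by rewrite negbK => /eqP ->; rewrite !mulr0.
have da : deg2 e b = deg2 e a + deg2 e x := br_idx_deg2 ax.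
have a0 : deg e a != 0 by rewrite deg_eq0; apply: contraNneq bx => a0; rewrite da a0 add0r.
have -> : deg e b - deg e x = deg e a by rewrite degB da addrK.
by field.
Qed.

Lemma der_coef_offdeg x b : deg2 e b != deg2 e x -> (D << x >>)@_b = (lie v_out << x >>)@_b.
Proof.
move=> bx.
have := congr1 (mcoeff b) (D_der << Lb 0 >> << x >>).
rewrite (lie_basis e (Lb 0) x) (br_L0 e x) derZ mcoeffZ mcoeffD.
move=> E0; have E := etrans E0
  (congr2 +%R (mcoeff_lie_DL0_offdeg bx) (mcoeff_lie_L0 (D << x >>) b)).
have bx0 : deg e b - deg e x != 0 by rewrite degB mulf_eq0 invr_eq0 pnatr_eq0 orbF intr_eq0 subr_eq0.
by apply: (eq_of_lincomb (d := 1) bx0 E); ring.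
Qed.

Lemma lie_v_out_samedeg x b : deg2 e b = deg2 e x -> (lie v_out << x >>)@_b = 0.
Proof.
move=> bx; rewrite mcoeff_lie_basis_r big1 // => a _; rewrite mcoeff_v_out.
have [/br_idx_supp ax|] := boolP ((br e a x)@_b != 0); last first.
  by rewrite negbK => /eqP ->; rewrite !mulr0.
have : deg2 e a = 0 by move: (br_idx_deg2 ax); rewrite bx; lia.
by rewrite /deg => ->; rewrite mul0r invr0 !mulr0 mul0r.
Qed.

Definition alpha := cLL 1.

Definition kD1 := cLM 0.
Definition kD2 := cLM 1 - cLM 0.
Definition kD3 := cYY 0 - alpha * epsv e.
Definition lamY : C := if e then 0 else - 2%:R * cLY 1.

Definition std_coef a b :=
  kD1 * (D1b e a)@_b + kD2 * (D2b e a)@_b + kD3 * (D3b e a)@_b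
  + (- alpha * (br e (Lb 0) a)@_b + lamY * (br e (Yb 0) a)@_b).

Local Ltac coef_value := solve [ apply: mcoeff_bvec_neq; done
  | apply: mcoeff_bvec; by rewrite ?add0r ?addr0 | apply: mcoeff0 | apply: mcoeff_br_L0 ].

(* ring compares atoms up to unfolding, which is hopeless on coefficients of D:
   generalize them first. *)
Local Ltac abstract_coefs := move: (cLM 0) (cLM 1) (cYY 0) (cMM 0) (cLY 1) alpha
  kD1 kD2 kD3 lamY => ? ? ? ? ? ? ? ? ? ?.

Lemma cLL_E n : cLL n = n%:~R * alpha.
Proof. exact: solve_cLL cLL_rec n. Qed.

Lemma cLM_E n : cLM n = cLM 0 + n%:~R * (cLM 1 - cLM 0).
Proof. exact: solve_cLM cLM_rec n. Qed.

Lemma cYY_E k : cYY k = cYY 0 + k%:~R * alpha.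
Proof. exact: solve_cYY cLL_E cYY_rec k. Qed.

Lemma cMM_E n : cMM n = cMM 0 + n%:~R * alpha.
Proof. exact: solve_cMM cLL_E cMM_rec n. Qed.

Lemma cMM0 : cMM 0 = 2%:R * (cYY 0 - alpha * epsv e).
Proof.
have twoepsE : (twoeps e)%:~R = 2%:R * epsv e :> C.
  by case: e; rewrite /twoeps /epsv ?mulr0 // divff // pnatr_eq0.
have E := cMM_cYY_rec 1 0.
rewrite cMM_E cYY_E !intrD twoepsE in E.
move: E; abstract_coefs => E.
by apply: (eq_of_lincomb (c := 1) (d := 1) _ E); [rewrite oner_eq0 | ring].
Qed.

Lemma cML_E n : cML n = 0.
Proof. exact: solve_cML cML_rec n. Qed.

Lemma std_coef_offdeg a b : deg2 e b != deg2 e a -> std_coef a b = 0.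
Proof.
move=> ba; rewrite /std_coef.
have [-> -> ->] : [/\ (D1b e a)@_b = 0, (D2b e a)@_b = 0 & (D3b e a)@_b = 0].
  by case: a ba => [[m|k]|m] /= ba; split; rewrite ?mcoeff0 //;
    apply: mcoeff_bvec_neq; apply: contraNneq ba => <-.
have -> : (br e (Lb 0) a)@_b = 0.
  apply/eqP; apply: contraNT ba => /br_idx_supp /br_idx_deg2 ->.
  by rewrite /= mulr0 add0r.
have -> : lamY * (br e (Yb 0) a)@_b = 0.
  have /orP[et|ef] := orbN e; first by rewrite /lamY (ifT _ _ et) mul0r.
  apply/eqP; rewrite mulf_eq0; apply/orP; right.
  apply: contraNT ba => /br_idx_supp /br_idx_deg2 ->.
  by rewrite /= /twoeps (ifN _ _ ef) mulr0 !add0r.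
by rewrite !mulr0 !addr0.
Qed.

Lemma std_coefE a b v1 v2 v3 v4 v5 :
  (D1b e a)@_b = v1 -> (D2b e a)@_b = v2 -> (D3b e a)@_b = v3 ->
  (br e (Lb 0) a)@_b = v4 -> (br e (Yb 0) a)@_b = v5 ->
  std_coef a b = kD1 * v1 + kD2 * v2 + kD3 * v3 + (- alpha * v4 + lamY * v5).
Proof. by rewrite /std_coef => -> -> -> -> ->. Qed.

Lemma std_coef_LL n : cLL n = std_coef (Lb n) (Lb n).
Proof.
rewrite (@std_coefE _ _ 0 0 0 (- deg e (Lb n)) 0); try coef_value.
by rewrite cLL_E /deg intrM; abstract_coefs; field.
Qed.

Lemma std_coef_LM n : cLM n = std_coef (Lb n) (Mb n).
Proof.
rewrite (@std_coefE _ _ 1 n%:~R 0 0 0); try coef_value.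
by rewrite cLM_E /kD1 /kD2; abstract_coefs; ring.
Qed.

Lemma std_coef_YY k : cYY k = std_coef (Yb k) (Yb k).
Proof.
rewrite (@std_coefE _ _ 0 0 1 (lyc e 0 k) 0); try coef_value.
by rewrite cYY_E /kD3 /lyc; abstract_coefs; field.
Qed.

Lemma std_coef_ML n : cML n = std_coef (Mb n) (Lb n).
Proof.
rewrite (@std_coefE _ _ 0 0 0 0 0); try coef_value.
by rewrite cML_E; abstract_coefs; ring.
Qed.

Lemma std_coef_MM n : cMM n = std_coef (Mb n) (Mb n).
Proof.
rewrite (@std_coefE _ _ 0 0 2%:R (- n%:~R) 0); try coef_value.
by rewrite cMM_E cMM0 /kD3; abstract_coefs; ring.
Qed.

Section Eps0.
Hypothesis e0 : e = false.

Let lyc_eps0 m n : lyc e m n = lyc false m n. Proof. by rewrite e0. Qed.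

Lemma cLY_E n : cLY n = n%:~R * cLY 1.
Proof. by apply: solve_cLY => m k; rewrite -!lyc_eps0; apply: cLY_rec. Qed.

Lemma cYL_E n : cYL n = 0.
Proof. by apply: solve_cYL => m k; rewrite -!lyc_eps0; apply: cYL_rec. Qed.

Lemma cYM_E n : cYM n = 2%:R * n%:~R * cLY 1.
Proof. by apply: (solve_cYM cLY_E) => m k; rewrite -!lyc_eps0; apply: cYM_rec. Qed.

Lemma cMY_E n : cMY n = 0.
Proof. by apply: solve_cMY => m k; rewrite -!lyc_eps0; apply: cMY_rec. Qed.

Lemma std_coef_LY n : cLY n = std_coef (Lb n) (Yb n).
Proof.
rewrite (@std_coefE _ _ 0 0 0 0 (- lyc e n 0)); try coef_value.
by rewrite cLY_E /lamY e0 /lyc /epsv; abstract_coefs; field.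
Qed.

Lemma std_coef_YL k : cYL k = std_coef (Yb k) (Lb k).
Proof.
rewrite (@std_coefE _ _ 0 0 0 0 0); try coef_value.
by rewrite cYL_E; abstract_coefs; ring.
Qed.

Lemma std_coef_YM k : cYM k = std_coef (Yb k) (Mb k).
Proof.
rewrite (@std_coefE _ _ 0 0 0 0 (0 - k)%:~R);
  last by apply: mcoeff_bvec; rewrite e0 add0r addr0.
all: try coef_value.
by rewrite cYM_E /lamY e0; abstract_coefs; ring.
Qed.

Lemma std_coef_MY n : cMY n = std_coef (Mb n) (Yb n).
Proof.
rewrite (@std_coefE _ _ 0 0 0 0 0); try coef_value.
by rewrite cMY_E; abstract_coefs; ring.
Qed.

End Eps0.

Lemma der_coef_samedeg a b : deg2 e b = deg2 e a -> (D << a >>)@_b = std_coef a b.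
Proof.
have Y_deg2 j n : deg2 e (Yb j) = 2 * n -> e = false /\ j = n.
  by case: e; rewrite /= /twoeps => jn; split => //; lia.
case: a => [[n|k]|n]; case: b => [[p|j]|p] /= ba.
- have -> : p = n by lia.
  exact: std_coef_LL.
- by have [e0 ->] := Y_deg2 _ _ ba; apply: std_coef_LY.
- have -> : p = n by lia.
  exact: std_coef_LM.
- by have [e0 ->] := Y_deg2 _ _ (esym ba); apply: std_coef_YL.
- have -> : j = k by lia.
  exact: std_coef_YY.
- by have [e0 ->] := Y_deg2 _ _ (esym ba); apply: std_coef_YM.
- have -> : p = n by lia.
  exact: std_coef_ML.
- by have [e0 ->] := Y_deg2 _ _ ba; apply: std_coef_MY.
- have -> : p = n by lia.
  exact: std_coef_MM.
Qed.

Definition u : SV := v_out + (- alpha *: << Lb 0 >> + lamY *: << Yb 0 >>).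

Lemma der_basis a :
  D << a >> = kD1 *: D1 (<< a >> : SV) + kD2 *: D2 (<< a >> : SV) + kD3 *: D3 (<< a >> : SV)
    + lie u << a >>.
Proof.
have lie_u : lie u << a >> =
    lie v_out << a >> + (- alpha *: br e (Lb 0) a + lamY *: br e (Yb 0) a).
  rewrite /u lieDl; congr (_ + _).
  exact: lie_lincomb_basis.
rewrite lie_u /D1 /D2 /D3 !linext_basis; apply/malgP => b.
rewrite [in RHS]mcoeff_lincomb -/(std_coef a b).
have [ba|ba] := eqVneq (deg2 e b) (deg2 e a).
  by rewrite [in RHS](lie_v_out_samedeg ba) add0r; apply: der_coef_samedeg.
by rewrite std_coef_offdeg // addr0; apply: der_coef_offdeg.
Qed.

Lemma derivation_decomp : exists (k1 k2 k3 : C) (v : SV),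
  forall y, D y = k1 *: D1 y + k2 *: D2 y + k3 *: D3 y + lie v y.
Proof.
exists kD1, kD2, kD3, u => y.
rewrite (linear_expand D_lin y) (@linear_expand e (@D1 e) (linext_linear _) y).
rewrite (@linear_expand e (@D2 e) (linext_linear _) y).
rewrite (@linear_expand e (@D3 e) (linext_linear _) y).
rewrite (@linear_expand e (lie u) (lie_linear_r u) y).
rewrite !scaler_sumr -!big_split; apply: eq_bigr => a _ /=.
exact/scale_lincomb/der_basis.
Qed.

End Derivation.

Section BasiswiseForm.
Variable e : bool.
Local Notation SV := (SV e).

Lemma basiswise_form (h g : SV -> SV -> SV) :
  (forall y, linear (h^~ y)) -> (forall y, linear (g^~ y)) ->
  (forall a, exists (k1 k2 k3 : C) (v : SV),
     forall y, g << a >> y = k1 *: D1 y + k2 *: D2 y + k3 *: D3 y + h v y) ->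
  exists (phi : {linear SV -> SV}) (rho1 rho2 rho3 : {scalar SV}),
    forall x y, g x y = rho1 x *: D1 y + rho2 x *: D2 y + rho3 x *: D3 y + h (phi x) y.
Proof.
move=> h_lin g_lin g_basis.
have G a : {p : C * C * C * SV | forall y,
    g << a >> y = p.1.1.1 *: D1 y + p.1.1.2 *: D2 y + p.1.2 *: D3 y + h p.2 y}.
  apply: constructive_indefinite_description.
  by have [k1 [k2 [k3 [v gav]]]] := g_basis a; exists (k1, k2, k3, v).
pose v a := (sval (G a)).2.
exists (linear_of (linext_linear v)).
exists (scalar_of (@linform_scalar e (fun a => (sval (G a)).1.1.1))).
exists (scalar_of (@linform_scalar e (fun a => (sval (G a)).1.1.2))).
exists (scalar_of (@linform_scalar e (fun a => (sval (G a)).1.2))).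
move=> x y; rewrite (linear_expand (g_lin y) x).
under eq_bigr do rewrite (svalP (G _) y).
rewrite sum_scale_lincomb; congr (_ + _); symmetry.
rewrite -[LHS]/(linear_of (h_lin y) (\sum_(a <- msupp x) x@_a *: v a)) raddf_sum.
by apply: eq_bigr => a _; apply: (scalable_linear (h_lin y)).
Qed.

End BasiswiseForm.

Theorem lemma3p1 (e : bool) (f : SV e -> SV e -> SV e)
  (f_lin_l : forall y : SV e, linear (fun x : SV e => f x y))
  (f_lin_r : forall x : SV e, linear (f x))
  (f_bider : biderivation f) :
  exists (phi psi : {linear SV e -> SV e})
         (rho1 rho2 rho3 theta1 theta2 theta3 : {scalar SV e}),
    forall x y : SV e,
      f x y = rho1 x *: D1 y + rho2 x *: D2 y + rho3 x *: D3 y + lie (phi x) y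
    /\ f x y = theta1 y *: D1 x + theta2 y *: D2 x + theta3 y *: D3 x
               + lie x (psi y).
Proof.
have [f_der_l f_der_r] := f_bider.
have f_left_basis a : exists (k1 k2 k3 : C) (v : SV e),
    forall y, f << a >> y = k1 *: D1 y + k2 *: D2 y + k3 *: D3 y + lie v y.
  exact: derivation_decomp (f_lin_r _) (f_der_r _).
have f_right_basis b : exists (k1 k2 k3 : C) (v : SV e),
    forall x, f x << b >> = k1 *: D1 x + k2 *: D2 x + k3 *: D3 x + lie x v.
  have f_der_b x y : f (lie x y) << b >> = lie (f x << b >>) y + lie x (f y << b >>).
    by rewrite f_der_l [LHS]addrC.
  have [k1 [k2 [k3 [v fbv]]]] := derivation_decomp (f_lin_l _) f_der_b.
  by exists k1, k2, k3, (- v) => x; rewrite fbv lie_anti lieNr.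
have [phi [rho1 [rho2 [rho3 f_left]]]] :=
  basiswise_form (@lie_linear_l e) f_lin_l f_left_basis.
have [psi [theta1 [theta2 [theta3 f_right]]]] :=
  basiswise_form (h := fun v x => lie x v) (@lie_linear_r e) f_lin_r f_right_basis.
exists phi, psi, rho1, rho2, rho3, theta1, theta2, theta3 => x y.
by split; [apply: f_left | apply: f_right].
Qed.
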